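(* Assume (H1)–(H3), $\kappa>\tilde\kappa$, and fix $\tilde\xi$ as below. There is a constant $C>0$ (depending only on $f,h,\kappa,r_0,\tilde\xi$) such that for every $u\in\mathcal X(\mathbb R)$ with $|u|^2\le r_0^2+\tilde\xi$ on $\mathbb R$: $$|u'|^2+F(|u|^2)+\tfrac\kappa2\big((h(|u|^2))'\big)^2\ge C^{-1}\big(|u'|^2+(|u|^2-r_0^2)^2\big)\quad\text{a.e. on }\mathbb R;$$ moreover $\||u|^2-r_0^2\|_{H^1(\mathbb R)}^2\le CE_\kappa(u)$, and if $\mu=\inf_{\mathbb R}|u|>0$ then $|P(u)|\le C\mu^{-1}E_\kappa(u)$.
   Context: $r_0>0$, $f,h\in C^\infty([0,\infty);\mathbb R)$ (H1), $f(r_0^2)=0$, $F(\sigma)=\int_\sigma^{r_0^2}f(w)dw$. (H2): $1+2\kappa\sigma h'(\sigma)^2>0$ for $\sigma\in[0,r_0^2]$; (H3): $F>0$ on $[0,r_0^2)$, $F''(r_0^2)>0$. $\tilde\kappa=\sup_{\sigma\in(0,r_0^2]}(-1/(2\sigma h'(\sigma)^2))$. $\tilde\xi>0$ is fixed such that $F(\sigma)>0$ and $1+2\kappa\sigma h'(\sigma)^2>0$ for all $\sigma\in(r_0^2,r_0^2+\tilde\xi]$. $\mathcal X(\mathbb R)=\{v\in H^1_{loc}(\mathbb R;\mathbb C):v'\in L^2,|v|^2-r_0^2\in L^2\}$. $E_\kappa(v)=\int(|v'|^2+F(|v|^2)+\frac\kappa2|(h(|v|^2))'|^2)dx$. $P(v)=\int\mathrm{Re}(iv'\bar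 v)(1-r_0^2/|v|^2)dx$ for $\inf|v|>0$. *)

From HB Require Import structures.
From mathcomp Require Import all_boot all_order all_algebra.
From mathcomp Require Import all_classical all_reals all_analysis.
From mathcomp Require Import complex.
Set Implicit Arguments. Unset Strict Implicit. Unset Printing Implicit Defensive.
Import Order.TTheory GRing.Theory Num.Theory.
Import numFieldNormedType.Exports.
Local Open Scope classical_set_scope.
Local Open Scope ring_scope.

Section Defs.
Variable R : realType.
Local Notation mu := (@lebesgue_measure R).

Definition cabs (z : R[i]) : R := Normc.normc z.

(* In one dimension this
   is exactly "w in W^{1,1}_loc(R) with weak derivative dw" (w being taken as
   its continuous representative). *)
Definition wderiv (w dw : R -> R) : Prop :=
  forall a b : R, a <= b ->
    mu.-integrable `[a, b] (EFin \o dw) /\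
    w b - w a = Rintegral mu `[a, b] dw.

Definition cwderiv (u du : R -> R[i]) : Prop :=
  wderiv (fun x => complex.Re (u x)) (fun x => complex.Re (du x)) /\
  wderiv (fun x => complex.Im (u x)) (fun x => complex.Im (du x)).

Definition inX (r0 : R) (u du : R -> R[i]) : Prop :=
  cwderiv u du /\
  mu.-integrable setT (fun x => ((cabs (du x)) ^+ 2)%:E) /\
  mu.-integrable setT (fun x => (((cabs (u x)) ^+ 2 - r0 ^+ 2) ^+ 2)%:E).

Definition rdw (g : R -> R) (x l : R) : Prop :=
  ((fun y => (g y - g x) / (y - x)) @ within [set y | 0 <= y /\ y != x] (nbhs x))
    --> l.

(* g in C^oo([0,oo)) with successive derivatives D n (D 0 = g on [0,oo)) *)
Definition smooth0 (g : R -> R) (D : nat -> R -> R) : Prop :=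
  (forall x, 0 <= x -> D 0%N x = g x) /\
  (forall (n : nat) x, 0 <= x -> rdw (D n) x (D n.+1 x)).

Definition Fpot (f : R -> R) (r0 : R) (s : R) : R :=
  if s <= r0 ^+ 2 then Rintegral mu `[s, r0 ^+ 2] f
  else - Rintegral mu `[r0 ^+ 2, s] f.

(* kappa_tilde = sup_{s in (0, r0^2]} ( -1 / (2 s h'(s)^2) ), with the
   convention -1/0 = -oo, as an extended real *)
Definition ktilde (dh : R -> R) (r0 : R) : \bar R :=
  ereal_sup [set (if dh s == 0 then -oo%E else (- (2 * s * (dh s) ^+ 2)^-1)%:E)
            | s in [set s | 0 < s <= r0 ^+ 2]].

(* E_kappa(u), where dhu is the weak derivative of h(|u|^2) *)
Definition Ekappa (kappa : R) (f : R -> R) (r0 : R) (u du : R -> R[i])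
  (dhu : R -> R) : \bar R :=
  (\int[mu]_(x in setT)
     ((cabs (du x)) ^+ 2 + Fpot f r0 ((cabs (u x)) ^+ 2)
      + kappa / 2 * (dhu x) ^+ 2)%:E)%E.

Definition Pmom (r0 : R) (u du : R -> R[i]) : \bar R :=
  (\int[mu]_(x in setT)
     (complex.Re ('i%C * du x * (u x)^*%C)
      * (1 - r0 ^+ 2 / (cabs (u x)) ^+ 2))%:E)%E.

End Defs.

(** Since [F] vanishes at [r0^2] with [F'' > 0] there and is positive elsewhere on
    [[0, r0^2 + xi]], compactness gives [F s >= c (s - r0^2)^2] on that interval;
    likewise [1 + 2 kappa s h'(s)^2 >= c].  Almost everywhere, with
    [P = Re u Re u' + Im u Im u'], one has [(|u|^2)' = 2 P] and
    [(h(|u|^2))' = h'(|u|^2) 2 P], while [P^2 <= |u|^2 |u'|^2]; for [kappa < 0] this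
    lets [|u'|^2] absorb the [kappa] term, which gives the pointwise coercivity.
    The [H^1] bound follows by integration since [((|u|^2)')^2 <= 4 (r0^2 + xi) |u'|^2],
    and the momentum density is at most [|u'| ||u|^2 - r0^2| / |u|], hence at most
    [(|u'|^2 + (|u|^2 - r0^2)^2) / mu] by AM-GM. *)

From HB Require Import structures.
From mathcomp Require Import all_boot all_order all_algebra.
From mathcomp Require Import all_classical all_reals all_analysis.
From mathcomp Require Import complex measurable_realfun.
From mathcomp Require Import ring lra.
Import Order.TTheory GRing.Theory Num.Theory.
Import numFieldNormedType.Exports.
Local Open Scope classical_set_scope.
Local Open Scope ring_scope.

Section one_sided_derivatives.
Context {R : realType}.
Implicit Types (g : R -> R) (x l : R).

Lemma rdwP {g x l} : rdw g x l -> forall e, 0 < e -> exists2 d, 0 < d &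
  forall y, 0 <= y -> y != x -> `|y - x| < d -> `|(g y - g x) / (y - x) - l| < e.
Proof.
move/cvgrPdist_lt => H e e0; have := H e e0.
rewrite near_withinE => /nbhs_ballP[d /= d0 Hd]; exists d => // y y0 yx yd.
by rewrite distrC; apply: (Hd y) => //=; rewrite /ball /= distrC.
Qed.

Lemma is_derive1P g x l : is_derive x 1 g l <-> forall e, 0 < e -> exists2 d, 0 < d &
  forall y, y != x -> `|y - x| < d -> `|(g y - g x) / (y - x) - l| < e.
Proof.
split=> [[dg <-] e e0|H].
  move: dg => /cvgrPdist_lt /(_ e e0).
  rewrite near_withinE => /nbhs_ballP[d /= d0 Hd]; exists d => // y yx yd.
  have := Hd (y - x); rewrite /ball /= sub0r normrN subr_eq0 => /(_ yd yx).
  by rewrite distrC [(y - x)%:A]mulr1 subrK [_ *: _]mulrC.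
have K : h^-1 *: ((g \o shift x) (h *: 1) - g x) @[h --> 0^'] --> l.
  apply/cvgrPdist_lt => e e0; have [d d0 Hd] := H e e0.
  rewrite near_withinE; apply/nbhs_ballP; exists d => // h /= hd hn0.
  move: hd; rewrite /ball /= sub0r normrN => hd.
  have := Hd (h + x); rewrite addrK -subr_eq0 addrK => /(_ hn0 hd).
  by rewrite distrC /= [h%:A]mulr1 [_ *: _]mulrC.
by apply: DeriveDef; [apply/cvg_ex; exists l | apply/cvg_lim].
Qed.

Lemma rdw_is_derive {g x l} : 0 < x -> rdw g x l -> is_derive x 1 g l.
Proof.
move=> x0 /rdwP H; apply/is_derive1P => e e0.
have [d d0 Hd] := H e e0; exists (Order.min d x); first by rewrite lt_min d0.
move=> y yx; rewrite lt_min => /andP[yd]; rewrite ltr_norml => /andP[xy _].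
by apply: Hd => //; lra.
Qed.

Lemma rdw_ext g g' x l : (forall y, 0 <= y -> g y = g' y) -> 0 <= x ->
  rdw g x l -> rdw g' x l.
Proof.
move=> E x0 H; apply: cvg_trans H; apply: near_eq_cvg.
rewrite near_withinE; near=> y => /= -[y0 _].
by rewrite (E y y0) (E x x0).
Unshelve. all: by end_near. Qed.

Lemma rdw_continuous {g x l} : 0 <= x -> rdw g x l ->
  forall e, 0 < e -> exists2 d, 0 < d &
    forall y, 0 <= y -> `|y - x| < d -> `|g y - g x| < e.
Proof.
move=> x0 /rdwP H e e0; have [d d0 Hd] := H 1 ltr01.
have l1_gt0 : 0 < `|l| + 1 by rewrite ltr_wpDl.
exists (Order.min d (e / (`|l| + 1))); first by rewrite lt_min d0 divr_gt0.
move=> y y0; rewrite lt_min => /andP[yd ye].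
have [->|yx] := eqVneq y x; first by rewrite subrr normr0.
have yx0 : y - x != 0 by rewrite subr_eq0.
have := Hd y y0 yx yd; set q := (g y - g x) / (y - x) => Hq.
have -> : g y - g x = q * (y - x) by rewrite /q divfK.
have q_lt : `|q| < `|l| + 1.
  by have := ler_normD (q - l) l; rewrite subrK; lra.
rewrite normrM; apply: (@le_lt_trans _ _ ((`|l| + 1) * `|y - x|)).
  by rewrite ler_wpM2r // ltW.
by rewrite -ltr_pdivlMl // mulrC.
Qed.

Lemma continuous_clamp0 g : (forall x, 0 <= x -> exists l, rdw g x l) ->
  continuous (fun s : R => g (Num.max s 0)).
Proof.
move=> Hg x; apply/cvgrPdist_lt => e e0.
have x0 : 0 <= Num.max x 0 by rewrite le_max lexx orbT.
have [l Hl] := Hg _ x0; have [d d0 Hd] := rdw_continuous x0 Hl e e0.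
apply/nbhs_ballP; exists d => // y; rewrite /ball /= => xy.
rewrite distrC; apply: Hd; first by rewrite le_max lexx orbT.
apply: le_lt_trans xy; rewrite distrC.
by case: (leP y 0) => y0; case: (leP x 0) => x0'; rewrite ?subrr ?normr0 //;
  rewrite ler_norml; have := ler_norm (y - x); have := ler_norm (x - y);
  rewrite distrC; lra.
Qed.

Lemma EVT_min_pos g a b : a <= b -> {within `[a, b], continuous g} ->
  (forall s, a <= s <= b -> 0 < g s) ->
  exists2 c, 0 < c & forall s, a <= s <= b -> c <= g s.
Proof.
move=> ab cg g_gt0; have [s0 s0ab Hs0] := EVT_min ab cg.
exists (g s0); first by apply: g_gt0; rewrite in_itv /= in s0ab.
by move=> s sab; apply: Hs0; rewrite in_itv /=.
Qed.

Lemma kappa_factor_ge {h : R -> R} {Dh : nat -> R -> R} {kappa M : R} :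
  smooth0 h Dh -> 0 <= M ->
  (forall s, 0 <= s <= M -> 0 < 1 + 2 * kappa * s * (Dh 1%N s) ^+ 2) ->
  exists2 c, 0 < c & forall s, 0 <= s <= M -> c <= 1 + 2 * kappa * s * (Dh 1%N s) ^+ 2.
Proof.
move=> [_ dDh] M_ge0 pos.
pose phi (s : R) := 1 + 2 * kappa * s * Dh 1%N (Num.max s 0) ^+ 2.
have phiE s : 0 <= s -> phi s = 1 + 2 * kappa * s * (Dh 1%N s) ^+ 2.
  by move=> s_ge0; rewrite /phi max_l.
have [c c_gt0 Hc] : exists2 c, 0 < c & forall s, 0 <= s <= M -> c <= phi s.
  apply: EVT_min_pos M_ge0 _ _.
  - apply: continuous_subspaceT => x; apply: cvgD; first exact: cvg_cst.
    apply: cvgM; first by apply: cvgM; [exact: cvg_cst | exact: cvg_id].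
    have Dh1_cont : continuous (fun s : R => Dh 1%N (Num.max s 0)).
      by apply: continuous_clamp0 => y y_ge0; exists (Dh 2%N y); exact: dDh.
    by rewrite expr2; apply: cvgM; exact: Dh1_cont.
  - by move=> s s_in; rewrite phiE ?(andP s_in).1 ?pos.
by exists c => // s s_in; rewrite -phiE ?(andP s_in).1 ?Hc.
Qed.

End one_sided_derivatives.

Section chain_rule.
Context {R : realType}.

Lemma is_derive_unique {g : R -> R} {x a b : R} :
  is_derive x 1 g a -> is_derive x 1 g b -> a = b.
Proof. by move=> [_ <-] [_ <-]. Qed.

Lemma is_derive_rdw_comp {s g : R -> R} {x ds dg : R} : (forall y, 0 <= s y) ->
  is_derive x 1 s ds -> rdw g (s x) dg ->
  is_derive x 1 (fun y => g (s y)) (dg * ds).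
Proof.
move=> s_ge0 /is_derive1P Ds /rdwP Dg; apply/is_derive1P => e e0.
have dg1_gt0 : 0 < `|dg| + 1 by rewrite ltr_pwDr.
have ds1_gt0 : 0 < `|ds| + 1 by rewrite ltr_pwDr.
pose e1 := Order.min 1 (e / (2 * (`|dg| + 1))).
have e1_gt0 : 0 < e1 by rewrite lt_min ltr01 divr_gt0 // mulr_gt0.
have e1_le1 : e1 <= 1 by rewrite ge_min lexx.
have e1_dg : e1 * (`|dg| + 1) <= e / 2.
  have : e1 <= e / (2 * (`|dg| + 1)) by rewrite ge_min lexx orbT.
  rewrite ler_pdivlMr ?mulr_gt0 //; nra.
pose e2 := e / (2 * (`|ds| + 1)).
have e2_ds : e2 * (`|ds| + 1) = e / 2 by rewrite /e2; field; lra.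
have [d1 d1_gt0 Hd1] := Ds e1 e1_gt0.
have [d2 d2_gt0 Hd2] := Dg e2 ltac:(by rewrite divr_gt0 // mulr_gt0).
exists (Order.min d1 (d2 / (`|ds| + 1))); first by rewrite lt_min d1_gt0 divr_gt0.
move=> y yx; rewrite lt_min ltr_pdivlMr // => /andP[yd1 yd2].
have yx0 : y - x != 0 by rewrite subr_eq0.
have := Hd1 y yx yd1; set qs := (s y - s x) / (y - x) => Hqs.
have qs_lt : `|qs| < `|ds| + 1 by have := ler_normD (qs - ds) ds; rewrite subrK; lra.
have Hs : `|dg * (qs - ds)| < e / 2.
  by rewrite normrM; have := normr_ge0 dg; have := normr_ge0 (qs - ds); nra.
have [sxy|sxy] := eqVneq (s y) (s x).
  move: Hs; rewrite /qs sxy !subrr !mul0r !sub0r mulrN !normrN; lra.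
have sxy0 : s y - s x != 0 by rewrite subr_eq0.
have sd : `|s y - s x| < d2.
  have -> : s y - s x = qs * (y - x) by rewrite /qs divfK.
  by rewrite normrM; have := normr_ge0 qs; have := normr_ge0 (y - x); nra.
(* away from the case [s y = s x], the quotient factors through that of [g] *)
have := Hd2 (s y) (s_ge0 y) sxy sd.
set qg := (g (s y) - g (s x)) / (s y - s x) => Hqg.
have -> : (g (s y) - g (s x)) / (y - x) - dg * ds = (qg - dg) * qs + dg * (qs - ds).
  by rewrite /qg /qs; field; apply/andP.
apply: le_lt_trans (ler_normD _ _) _.
have : `|(qg - dg) * qs| < e / 2.
  rewrite normrM -e2_ds; apply: (@le_lt_trans _ _ (`|qg - dg| * (`|ds| + 1))).
    by rewrite ler_wpM2l // ltW.
  by rewrite ltr_pM2r.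
lra.
Qed.

End chain_rule.

Section potential_well.
Context {R : realType}.
Context {F F1 : R -> R} {t0 M l : R}.
Hypotheses (t0_gt0 : 0 < t0) (t0_lt_M : t0 < M) (F_t0 : F t0 = 0)
  (dF : forall s, 0 <= s -> rdw F s (F1 s)) (d2F : rdw F1 t0 l) (l_gt0 : 0 < l)
  (F_gt0 : forall s, 0 <= s <= M -> s != t0 -> 0 < F s).

Let F_is_derive (s : R) : 0 < s -> is_derive s 1 F (F1 s).
Proof. by move=> s_gt0; exact: rdw_is_derive s_gt0 (dF _ (ltW s_gt0)). Qed.

Lemma potential_deriv_eq0 : F1 t0 = 0.
Proof.
have F_min (t : R) : t \in `]0, M[ -> F t0 <= F t.
  rewrite in_itv /= F_t0 => /andP[t_gt0 t_ltM].
  have [->|tt0] := eqVneq t t0; first by rewrite F_t0.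
  by apply/ltW/F_gt0 => //; rewrite !ltW.
have t0_in : t0 \in `]0, M[ by rewrite in_itv /= t0_gt0.
have derivF (t : R) : t \in `]0, M[ -> derivable F t 1.
  by rewrite in_itv /= => /andP[t_gt0 _]; case: (F_is_derive _ t_gt0).
have := derive1_at_min (ltW (lt_trans t0_gt0 t0_lt_M)) derivF t0_in F_min.
by move=> [_ <-]; case: (F_is_derive _ t0_gt0) => _ <-.
Qed.

Lemma potential_ge_quadratic_near : exists2 del, 0 < del &
  forall s, `|s - t0| < del -> l / 4 * (s - t0) ^+ 2 <= F s.
Proof.
have [d d_gt0 Hd] := rdwP d2F _ (ltac:(by rewrite divr_gt0) : 0 < l / 2).
exists (Order.min d t0) => [|s]; first by rewrite lt_min d_gt0 t0_gt0.
(* Since [F1 c / (c - t0) > l / 2] near [t0], [phi] decreases up to [t0] and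
   increases after it, and [phi t0 = 0]. *)
pose phi s := F s - l / 4 * (s - t0) ^+ 2.
pose dphi s := F1 s - l / 2 * (s - t0).
have phi_t0 : phi t0 = 0 by rewrite /phi F_t0 subrr expr0n /= mulr0 subr0.
have dphi_sign c : c != t0 -> `|c - t0| < Order.min d t0 -> 0 < dphi c * (c - t0).
  move=> ct; rewrite lt_min => /andP[cd]; rewrite ltr_norml => /andP[c_ge0 _].
  have := Hd c ltac:(lra) ct cd; rewrite potential_deriv_eq0 subr0.
  rewrite ltr_norml => /andP[Hq _]; have ct0 : c - t0 != 0 by rewrite subr_eq0.
  have -> : dphi c * (c - t0) = (F1 c / (c - t0) - l / 2) * (c - t0) ^+ 2.
    by rewrite /dphi; field.
  by rewrite mulr_gt0 ?subr_gt0 ?exprn_even_gt0 //; lra.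
have Dphi (c : R) : 0 < c -> is_derive c 1 phi (dphi c).
  move=> c_gt0; have Dq := is_deriveZ (l / 4)
    (is_deriveX 2 (is_deriveB (is_derive_id c 1) (is_derive_cst t0 c 1))).
  apply: is_derive_eq (is_deriveB (F_is_derive _ c_gt0) Dq) _.
  by rewrite /dphi /GRing.scale !fctE /= expr1; field.
have mvt a b : 0 < a -> a < b ->
    exists2 c, a < c < b & phi b - phi a = dphi c * (b - a).
  move=> a_gt0 ab; have phi_cont : {within `[a, b], continuous phi}.
    apply: derivable_within_continuous => c; rewrite in_itv /= => /andP[ac _].
    by have [] := Dphi c (lt_le_trans a_gt0 ac).
  have Dphi_in c : c \in `]a, b[ -> is_derive c 1 phi (dphi c).
    by rewrite in_itv /= => /andP[ac _]; apply: Dphi; apply: lt_trans ac.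
  have [c c_in Hc] := MVT ab Dphi_in phi_cont.
  by exists c; first by rewrite in_itv /= in c_in.
move=> sd; suff : 0 <= phi s by rewrite /phi; lra.
move: sd; rewrite lt_min !ltr_norml => /andP[/andP[sd1 sd2] /andP[st1 st2]].
have near_t0 c : s <= c <= t0 \/ t0 <= c <= s -> `|c - t0| < Order.min d t0.
  by move=> c_in; rewrite lt_min !ltr_norml; apply/andP; split; apply/andP; split;
    case: c_in => /andP[? ?]; lra.
have [st|st|->] := ltgtP s t0; last by rewrite phi_t0.
- have [c /andP[sc ct] Hc] := mvt s t0 ltac:(lra) st.
  have c_near := near_t0 c ltac:(left; apply/andP; split; lra).
  have := dphi_sign c ltac:(by rewrite lt_eqF) c_near.
  by rewrite phi_t0 in Hc; nra.
- have [c /andP[tc cs] Hc] := mvt t0 s t0_gt0 st.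
  have c_near := near_t0 c ltac:(right; apply/andP; split; lra).
  have := dphi_sign c ltac:(by rewrite gt_eqF) c_near.
  by rewrite phi_t0 in Hc; nra.
Qed.

Lemma potential_ge_quadratic : exists2 c, 0 < c &
  forall s, 0 <= s <= M -> c * (s - t0) ^+ 2 <= F s.
Proof.
have [del del_gt0 F_near] := potential_ge_quadratic_near.
have M_gt0 : 0 < M by apply: lt_trans t0_lt_M.
(* The tent makes [G] positive at [t0] too, while [G = F] where the local bound
   does not apply; compactness then bounds [F] below there. *)
pose tent s := Num.max 0 (del - `|s - t0|).
pose G s := F (Num.max s 0) + tent s.
have tent_cont : continuous tent.
  have -> : tent = cst 0 \max (fun s => del - `|s - t0|) by [].
  apply: max_fun_continuous => x; first exact: cvg_cst.
  apply: cvgB; first exact: cvg_cst.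
  by apply: cvg_norm; apply: cvgB; [exact: cvg_id | exact: cvg_cst].
have [m m_gt0 G_ge] : exists2 m, 0 < m & forall s, 0 <= s <= M -> m <= G s.
  apply: EVT_min_pos; first exact: ltW.
    apply: continuous_subspaceT => x; apply: cvgD; last exact: tent_cont.
    by apply: continuous_clamp0 => y y_ge0; exists (F1 y); exact: dF.
  move=> s /andP[s_ge0 s_le]; rewrite /G max_l //.
  have [->|st] := eqVneq s t0.
    by rewrite F_t0 add0r /tent subrr normr0 subr0 lt_max del_gt0 orbT.
  by rewrite ltr_pwDl ?F_gt0 ?s_ge0 // le_max lexx.
exists (Num.min (l / 4) (m / M ^+ 2)); first by rewrite lt_min !divr_gt0 // exprn_gt0.
move=> s /andP[s_ge0 s_le]; have [sd|sd] := ltP `|s - t0| del.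
  by apply: le_trans (F_near s sd); rewrite ler_wpM2r ?sqr_ge0 // ge_min lexx.
have <- : G s = F s by rewrite /G /tent max_l // max_l ?addr0 // subr_le0.
apply: le_trans (G_ge s ltac:(by rewrite s_ge0)).
apply: (@le_trans _ _ (m / M ^+ 2 * (s - t0) ^+ 2)).
  by rewrite ler_wpM2r ?sqr_ge0 // ge_min lexx orbT.
rewrite mulrAC ler_pdivrMr ?exprn_gt0 // ler_wpM2l ?ltW //.
have : 0 < (M - (s - t0)) * (M + (s - t0)).
  by apply: mulr_gt0; have := t0_gt0; have := t0_lt_M; lra.
by rewrite -subr_gt0 subr_sqr.
Qed.

End potential_well.

Section weak_derivative.
Context {R : realType}.
Local Notation mu := (@lebesgue_measure R).
Implicit Types (w dw : R -> R).

Lemma wderiv_measurable {w dw} : wderiv w dw -> measurable_fun setT dw.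
Proof.
move=> H; rewrite -(bigcup_itvT true false); apply/measurable_fun_bigcup => // n.
have [n_le|n_gt] := leP (1 *- n) (n%:R : R); last first.
  by rewrite set_itv_ge ?bnd_simp -?ltNge //; exact: measurable_fun_set0.
by have [/integrableP [/measurable_EFinP]] := H _ _ n_le.
Qed.

Lemma wderiv_locally_integrable {w dw} : wderiv w dw -> locally_integrable setT dw.
Proof.
move=> H; split; [exact: wderiv_measurable H | exact: openT |].
move=> K _ cK; have [N [_ N1x]] := compact_bounded cK.
have KN : K `<=` `[- (`|N| + 1), `|N| + 1].
  by move=> z Kz; rewrite set_itvcc /= -ler_norml N1x// ltr_pwDr// ler_norm.
have [iN _] := H _ _ (ltac:(have := normr_ge0 N; lra) : - (`|N| + 1) <= `|N| + 1).
have mK := compact_measurable cK.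
by have /integrableP[] : mu.-integrable K (EFin \o dw) by apply: integrableS iN.
Qed.

Lemma wderiv_continuous {w dw} : wderiv w dw -> continuous w.
Proof.
move=> H x; have xx : x - 1 < x + 1 by lra.
have [ix _] := H _ _ (ltW xx).
have [int_cont _ _] := (continuous_within_itvP _ xx).1
  (parameterized_integral_continuous (ltW xx) ix).
pose G y := w (x - 1) + parameterized_integral mu (x - 1) y dw.
have wG : \near x, G x = w x.
  have : \forall y \near x, x - 1 < y by apply: lt_nbhsr; lra.
  apply: filterS => y /ltW/(H (x - 1) y)[_ Hy].
  by rewrite /G /parameterized_integral -Hy; ring.
apply: cvg_trans (near_eq_cvg wG) _; rewrite -(nbhs_singleton wG).
apply: cvgD; first exact: cvg_cst.
by apply: int_cont; rewrite in_itv /=; apply/andP; split; lra.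
Qed.

Lemma wderiv_is_derive_ae {w dw} : wderiv w dw ->
  {ae mu, forall x : R, is_derive x 1 w (dw x)}.
Proof.
move=> H; have := lebesgue_differentiation (wderiv_locally_integrable H).
apply: filterS; first exact: (ae_filter_ringOfSetsType mu).
move=> x lx; have [ix _] := H (x - 1) (x + 1) ltac:(lra).
have [dF F'] := @FTC1_lebesgue_pt R dw (BLeft (x - 1)) x (x + 1) ltac:(lra) ix
  ltac:(by rewrite lte_fin; lra) lx.
set F := (fun y => _) in dF F'.
have DF : is_derive x 1 F (dw x) by rewrite -F' derive1E; exact: derivableP.
have DwF : is_derive x 1 (fun y => w (x - 1) + F y) (dw x).
  by apply: is_derive_eq (is_deriveD (is_derive_cst _ x 1) DF) _; rewrite add0r.
apply: near_eq_is_derive DwF.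
have : \forall y \near x, x - 1 < y by apply: lt_nbhsr; lra.
apply: filterS => y /ltW/(H (x - 1) y)[_ Hy].
by rewrite /F /= -Hy; ring.
Qed.

End weak_derivative.

Section pointwise_bounds.
Context {R : realType}.

Lemma cabs_ge0 (z : R[i]) : 0 <= cabs z.
Proof. by case: z => a b; rewrite /cabs /= sqrtr_ge0. Qed.

Lemma cabs_sqr (z : R[i]) : cabs z ^+ 2 = complex.Re z ^+ 2 + complex.Im z ^+ 2.
Proof. by case: z => a b; rewrite /cabs /= sqr_sqrtr // addr_ge0 // sqr_ge0. Qed.

Lemma Re_mulI_conj (z w : R[i]) :
  complex.Re ('i%C * z * w^*%C) = complex.Re z * complex.Im w - complex.Im z * complex.Re w.
Proof. by case: z => a b; case: w => c d /=; ring. Qed.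

Lemma dot_sqr_le (a b c d : R) :
  (a * c + b * d) ^+ 2 <= (a ^+ 2 + b ^+ 2) * (c ^+ 2 + d ^+ 2).
Proof.
have -> : (a ^+ 2 + b ^+ 2) * (c ^+ 2 + d ^+ 2) = (a * c + b * d) ^+ 2 + (a * d - b * c) ^+ 2.
  by ring.
by rewrite lerDl sqr_ge0.
Qed.

Lemma energy_density_ge (S D P FS dh kappa t0 c : R) :
  0 <= D -> P ^+ 2 <= S * D -> c <= 1 -> c * (S - t0) ^+ 2 <= FS ->
  c <= 1 + 2 * kappa * S * dh ^+ 2 ->
  c * (D + (S - t0) ^+ 2) <= D + FS + kappa / 2 * (dh * (2 * P)) ^+ 2.
Proof.
move=> D_ge0 PS c_le1 cF ck.
have -> : kappa / 2 * (dh * (2 * P)) ^+ 2 = 2 * kappa * dh ^+ 2 * P ^+ 2.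
  by rewrite !exprMn; field.
suff : c * D <= D + 2 * kappa * dh ^+ 2 * P ^+ 2 by lra.
have [kappa_ge0|kappa_lt0] := leP 0 kappa.
  have : 0 <= 2 * kappa * dh ^+ 2 * P ^+ 2.
    by rewrite mulr_ge0 ?sqr_ge0 // mulr_ge0 ?sqr_ge0 // mulr_ge0.
  by have := ler_piMl D_ge0 c_le1; lra.
have k_le0 : 2 * kappa * dh ^+ 2 <= 0.
  by rewrite mulr_le0_ge0 ?sqr_ge0 //; lra.
have : 2 * kappa * dh ^+ 2 * (S * D) <= 2 * kappa * dh ^+ 2 * P ^+ 2.
  by rewrite ler_wnM2l.
have : c * D <= (1 + 2 * kappa * S * dh ^+ 2) * D by rewrite ler_wpM2r.
lra.
Qed.

Lemma momentum_density_le (S D P t0 m : R) : 0 < m -> m ^+ 2 <= S ->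
  P ^+ 2 <= S * D -> `|P * (1 - t0 / S)| <= (D + (S - t0) ^+ 2) / m.
Proof.
move=> m_gt0 mS PS; have S_gt0 : 0 < S by apply: lt_le_trans mS; rewrite exprn_gt0.
have -> : 1 - t0 / S = (S - t0) / S by field; rewrite gt_eqF.
set q := S - t0; set x := `|P|; set y := `|q|.
have x_ge0 : 0 <= x := normr_ge0 P.
have y_ge0 : 0 <= y := normr_ge0 q.
have x2 : x ^+ 2 = P ^+ 2 by rewrite /x real_normK ?num_real.
have y2 : y ^+ 2 = q ^+ 2 by rewrite /y real_normK ?num_real.
have amgm : 2 * (m * x) * (S * y) <= (m * x) ^+ 2 + (S * y) ^+ 2.
  by have := sqr_ge0 (m * x - S * y); lra.
have mx : (m * x) ^+ 2 <= S * (S * D).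
  rewrite exprMn x2; apply: le_trans (_ : S * P ^+ 2 <= _).
    by rewrite ler_wpM2r ?sqr_ge0.
  by rewrite ler_wpM2l // ltW.
have key : S * (m * x * y) <= S * (S * (D + y ^+ 2)).
  have : 0 <= m * x * y by rewrite !mulr_ge0 // ltW.
  by nra.
rewrite normrM normf_div (gtr0_norm S_gt0) -/x -/y ler_pdivlMr //.
have -> : x * (y / S) * m = m * x * y / S by ring.
by rewrite ler_pdivrMr // -y2 -(ler_pM2l S_gt0) [(_ + _) * S]mulrC.
Qed.

End pointwise_bounds.

Section integral_bounds.
Context {R : realType}.
Local Notation mu := (@lebesgue_measure R).
Let aeF := ae_filter_ringOfSetsType mu.

Lemma ae_and {P Q : R -> Prop} : {ae mu, forall x, P x} -> {ae mu, forall x, Q x} ->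
  {ae mu, forall x, P x /\ Q x}.
Proof. by move=> HP HQ; apply: (filterS2 aeF _ HP HQ) => x; split. Qed.

Lemma integral_abs_le_scale (g e : R -> R) (k : R) : 0 <= k ->
  measurable_fun setT g -> measurable_fun setT e ->
  {ae mu, forall x, 0 <= e x /\ `|g x| <= k * e x} ->
  (\int[mu]_(x in setT) `|g x|%:E <= k%:E * \int[mu]_(x in setT) (e x)%:E)%E.
Proof.
move=> k_ge0 mg me ae_le; pose ep x := Num.max (e x) 0.
have ep_ge0 x : 0 <= ep x by rewrite le_max lexx orbT.
have mep : measurable_fun setT ep by apply: measurable_maxr => //; exact: measurable_cst.
have -> : (\int[mu]_(x in setT) (e x)%:E = \int[mu]_(x in setT) (ep x)%:E)%E.
  apply: ae_eq_integral => //; [exact/measurable_EFinP | exact/measurable_EFinP |].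
  apply: filterS ae_le; first exact: aeF.
  by move=> x [e_ge0 _] _; rewrite /ep max_l.
rewrite -ge0_integralZl_EFin //; last 2 first.
- by move=> x _; rewrite lee_fin.
- exact/measurable_EFinP.
apply: ae_ge0_le_integral => //.
- by apply/measurable_EFinP; exact: measurableT_comp (@normr_measurable _ _) mg.
- by move=> x _; rewrite lee_fin mulr_ge0.
- by apply/measurable_EFinP; apply: measurable_funM => //; exact: measurable_cst.
apply: filterS ae_le; first exact: aeF.
by move=> x [_ g_le] _; rewrite lee_fin (le_trans g_le) // ler_wpM2l // /ep le_max lexx.
Qed.

End integral_bounds.

Section energy_estimates.
Context {R : realType}.
Local Notation mu := (@lebesgue_measure R).
Let aeF := ae_filter_ringOfSetsType mu.
Context {F h dh : R -> R} {kappa t0 M c : R}.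
Hypotheses (c_gt0 : 0 < c) (c_le1 : c <= 1)
  (F_ge : forall s, 0 <= s <= M -> c * (s - t0) ^+ 2 <= F s)
  (kappa_ge : forall s, 0 <= s <= M -> c <= 1 + 2 * kappa * s * dh s ^+ 2)
  (F_cont : continuous (fun s : R => F (Num.max s 0)))
  (dh_rdw : forall s, 0 <= s -> rdw h s (dh s)).
Context {u du : R -> R[i]} {dhu dw : R -> R}.
Hypotheses (Re_weak : wderiv (fun x => complex.Re (u x)) (fun x => complex.Re (du x)))
  (Im_weak : wderiv (fun x => complex.Im (u x)) (fun x => complex.Im (du x)))
  (u_le : forall x, cabs (u x) ^+ 2 <= M)
  (dhu_weak : wderiv (fun x => h (cabs (u x) ^+ 2)) dhu)
  (dw_weak : wderiv (fun x => cabs (u x) ^+ 2 - t0) dw).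

Local Notation sq_u x := (cabs (u x) ^+ 2).
Local Notation sq_du x := (cabs (du x) ^+ 2).
Local Notation energy_density x := (sq_du x + F (sq_u x) + kappa / 2 * dhu x ^+ 2).

Lemma sq_u_continuous : continuous (fun x => sq_u x).
Proof.
have -> : (fun x => sq_u x) = (fun x => (sq_u x - t0) + t0).
  by apply/funext => x; rewrite subrK.
by move=> x; apply: cvgD; [exact: (wderiv_continuous dw_weak x) | exact: cvg_cst].
Qed.

Lemma sq_du_measurable : measurable_fun setT (fun x => sq_du x).
Proof.
have -> : (fun x => sq_du x) = (fun x => complex.Re (du x) ^+ 2 + complex.Im (du x) ^+ 2).
  by apply/funext => x; rewrite cabs_sqr.
by apply: measurable_funD; apply: measurable_funX;
  [exact: wderiv_measurable Re_weak | exact: wderiv_measurable Im_weak].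
Qed.

Lemma energy_density_measurable : measurable_fun setT (fun x => energy_density x).
Proof.
apply: measurable_funD; first apply: measurable_funD.
- exact: sq_du_measurable.
- apply: continuous_measurable_fun => x.
  have -> : (fun x => F (sq_u x)) = (fun x => F (Num.max (sq_u x) 0)).
    by apply/funext => y; rewrite max_l ?sqr_ge0.
  exact: continuous_comp (sq_u_continuous x) (F_cont _).
- apply: measurable_funM; first exact: measurable_cst.
  by apply: measurable_funX; exact: wderiv_measurable dhu_weak.
Qed.

Lemma energy_density_coercive : {ae mu, forall x,
  c * (sq_du x + (sq_u x - t0) ^+ 2) <= energy_density x /\ dw x ^+ 2 <= 4 * M * sq_du x}.
Proof.
have := ae_and (ae_and (wderiv_is_derive_ae Re_weak) (wderiv_is_derive_ae Im_weak))
  (ae_and (wderiv_is_derive_ae dw_weak) (wderiv_is_derive_ae dhu_weak)).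
move=> ae_deriv; apply: filterS ae_deriv; first exact: aeF.
move=> x [[dRe dIm] [ddw ddhu]].
set a := complex.Re (u x); set b := complex.Im (u x).
set P := a * complex.Re (du x) + b * complex.Im (du x).
have dw_x : dw x = 2 * P.
  have sq_uE : (fun y => sq_u y - t0) = (fun y => complex.Re (u y)) ^+ 2
      + (fun y => complex.Im (u y)) ^+ 2 - cst t0.
    by apply/funext => y; rewrite !fctE cabs_sqr.
  rewrite sq_uE in ddw; apply: is_derive_unique ddw _.
  apply: is_derive_eq (is_deriveB (is_deriveD (is_deriveX 2 dRe) (is_deriveX 2 dIm))
    (is_derive_cst t0 x 1)) _.
  by rewrite /GRing.scale /= expr1 /P; ring.
have dhu_x : dhu x = dh (sq_u x) * dw x.
  have dsq : is_derive x 1 (fun y => sq_u y) (dw x).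
    have -> : (fun y => sq_u y) = (fun y => sq_u y - t0) + cst t0.
      by apply/funext => y; rewrite !fctE subrK.
    by apply: is_derive_eq (is_deriveD ddw (is_derive_cst t0 x 1)) _; rewrite addr0.
  have sq_ge0 y : 0 <= sq_u y by exact: sqr_ge0.
  exact: is_derive_unique ddhu (is_derive_rdw_comp sq_ge0 dsq (dh_rdw _ (sq_ge0 x))).
have PSD : P ^+ 2 <= sq_u x * sq_du x by rewrite !cabs_sqr; exact: dot_sqr_le.
have S_in : 0 <= sq_u x <= M by rewrite sqr_ge0 u_le.
split; first by rewrite dhu_x dw_x energy_density_ge ?sqr_ge0 ?F_ge ?kappa_ge.
rewrite dw_x (_ : (2 * P) ^+ 2 = 4 * P ^+ 2); last by ring.
rewrite -mulrA ler_pM2l //.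
by apply: le_trans PSD _; rewrite ler_wpM2r ?sqr_ge0 ?u_le.
Qed.

Let M_ge0 : 0 <= M. Proof. exact: le_trans (sqr_ge0 _) (u_le 0). Qed.
Let K_ge1 : 1 <= 1 + 4 * M. Proof. by rewrite lerDl mulr_ge0. Qed.

Let coercive_scaled {X e : R} : 0 <= X -> c * X <= e ->
  0 <= e /\ (1 + 4 * M) * X <= (1 + 4 * M) / c * e.
Proof.
move=> X_ge0 cX; split; first exact: le_trans (mulr_ge0 (ltW c_gt0) X_ge0) cX.
rewrite -mulrA ler_wpM2l ?addr_ge0 ?mulr_ge0 //.
by rewrite mulrC ler_pdivlMr // mulrC.
Qed.

Lemma energy_density_ge_ae : {ae mu, forall x,
  ((1 + 4 * M) / c)^-1 * (sq_du x + (sq_u x - t0) ^+ 2) <= energy_density x}.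
Proof.
apply: filterS energy_density_coercive; first exact: aeF.
move=> x [coerc _]; apply: le_trans coerc; rewrite ler_wpM2r ?addr_ge0 ?sqr_ge0 //.
by rewrite invf_div ler_pdivrMr ?(lt_le_trans ltr01) // ler_peMr // ltW.
Qed.

Lemma sobolev_bound :
  (\int[mu]_(x in setT) (((sq_u x - t0) ^+ 2 + dw x ^+ 2)%:E)
    <= ((1 + 4 * M) / c)%:E * \int[mu]_(x in setT) (energy_density x)%:E)%E.
Proof.
have g_ge0 x : 0 <= (sq_u x - t0) ^+ 2 + dw x ^+ 2 by rewrite addr_ge0 ?sqr_ge0.
under eq_integral => x _ do rewrite -(ger0_norm (g_ge0 x)).
apply: integral_abs_le_scale.
- by rewrite divr_ge0 ?(le_trans ler01 K_ge1) ?(ltW c_gt0).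
- apply: measurable_funD; apply: measurable_funX; last exact: wderiv_measurable dw_weak.
  apply: measurable_funB; last exact: measurable_cst.
  exact: continuous_measurable_fun sq_u_continuous.
- exact: energy_density_measurable.
apply: filterS energy_density_coercive; first exact: aeF.
move=> x [coerc dw_le]; have X_ge0 : 0 <= sq_du x + (sq_u x - t0) ^+ 2.
  by rewrite addr_ge0 ?sqr_ge0.
have [e_ge0 le_e] := coercive_scaled X_ge0 coerc.
split=> //; rewrite ger0_norm //; apply: le_trans le_e.
have := mulr_ge0 M_ge0 (sqr_ge0 (sq_u x - t0)); have := sqr_ge0 (cabs (du x)).
by lra.
Qed.

Lemma momentum_bound (m : R) : 0 < m -> (forall x, m <= cabs (u x)) ->
  (`|\int[mu]_(x in setT) (complex.Re ('i%C * du x * (u x)^*%C) * (1 - t0 / sq_u x))%:E|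
    <= ((1 + 4 * M) / c / m)%:E * \int[mu]_(x in setT) (energy_density x)%:E)%E.
Proof.
move=> m_gt0 m_le.
have m2_le x : m ^+ 2 <= sq_u x.
  by rewrite ler_pXn2r ?nnegrE ?m_le ?cabs_ge0 ?ltW.
have sq_u_neq0 x : sq_u x != 0.
  by rewrite gt_eqF // (lt_le_trans _ (m2_le x)) ?exprn_gt0.
pose Re_u x := complex.Re (u x); pose Im_u x := complex.Im (u x).
pose g x := (complex.Re (du x) * Im_u x - complex.Im (du x) * Re_u x) * (1 - t0 / sq_u x).
have mg : measurable_fun setT g.
  have cRe : continuous Re_u := wderiv_continuous Re_weak.
  have cIm : continuous Im_u := wderiv_continuous Im_weak.
  apply: measurable_funM.
    apply: measurable_funB; apply: measurable_funM.
    - exact: wderiv_measurable Re_weak.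
    - exact: continuous_measurable_fun cIm.
    - exact: wderiv_measurable Im_weak.
    - exact: continuous_measurable_fun cRe.
  apply: continuous_measurable_fun => x; apply: cvgB; first exact: cvg_cst.
  by apply: cvgM; [exact: cvg_cst | exact: cvgV (sq_u_neq0 x) (sq_u_continuous x)].
under eq_integral do rewrite Re_mulI_conj.
apply: le_trans (le_abse_integral _ _ _) _ => //; first exact/measurable_EFinP.
under eq_integral do rewrite abse_EFin.
apply: integral_abs_le_scale.
- by rewrite !divr_ge0 ?(le_trans ler01 K_ge1) ?(ltW c_gt0) ?(ltW m_gt0).
- exact: mg.
- exact: energy_density_measurable.
apply: filterS energy_density_coercive; first exact: aeF.
move=> x [coerc _]; have X_ge0 : 0 <= sq_du x + (sq_u x - t0) ^+ 2.
  by rewrite addr_ge0 ?sqr_ge0.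
have [e_ge0 le_e] := coercive_scaled X_ge0 coerc.
split=> //; set P := complex.Re (du x) * Im_u x - complex.Im (du x) * Re_u x.
have PSD : P ^+ 2 <= sq_u x * sq_du x.
  rewrite !cabs_sqr [_ + complex.Im _ ^+ 2]addrC -[complex.Re (u x) ^+ 2]sqrrN.
  by rewrite (_ : P = Im_u x * complex.Re (du x) + (- Re_u x) * complex.Im (du x));
    [exact: dot_sqr_le | rewrite /P; ring].
apply: le_trans (momentum_density_le _ _ _ t0 _ m_gt0 (m2_le x) PSD) _.
rewrite mulrAC ler_pM2r ?invr_gt0 //; apply: le_trans le_e.
by rewrite ler_peMl ?K_ge1.
Qed.

End energy_estimates.

Lemma coercivity_constant {R : realType} {f h F1 : R -> R} {Dh : nat -> R -> R}
    {r0 kappa xi l : R} :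
  0 < r0 -> smooth0 h Dh ->
  (forall s, 0 <= s <= r0 ^+ 2 -> 0 < 1 + 2 * kappa * s * (Dh 1%N s) ^+ 2) ->
  (forall s, 0 <= s < r0 ^+ 2 -> 0 < Fpot f r0 s) ->
  (forall s, 0 <= s -> rdw (Fpot f r0) s (F1 s)) -> rdw F1 (r0 ^+ 2) l -> 0 < l ->
  (forall s, r0 ^+ 2 < s <= r0 ^+ 2 + xi ->
     0 < Fpot f r0 s /\ 0 < 1 + 2 * kappa * s * (Dh 1%N s) ^+ 2) ->
  0 < xi ->
  exists2 c, 0 < c <= 1 & forall s, 0 <= s <= r0 ^+ 2 + xi ->
    c * (s - r0 ^+ 2) ^+ 2 <= Fpot f r0 s /\ c <= 1 + 2 * kappa * s * (Dh 1%N s) ^+ 2.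
Proof.
move=> r0_gt0 h_smooth H2 H3 dF d2F l_gt0 Hxi xi_gt0.
set t0 := r0 ^+ 2; set M := t0 + xi.
have t0_gt0 : 0 < t0 by rewrite exprn_gt0.
have t0_lt_M : t0 < M by rewrite ltrDl.
have F_t0 : Fpot f r0 t0 = 0 by rewrite /Fpot lexx set_itv1 Rintegral_set1.
have F_gt0 s : 0 <= s <= M -> s != t0 -> 0 < Fpot f r0 s.
  move=> /andP[s_ge0 s_le] st; have [s_lt|s_gt] := ltP s t0.
    by apply: H3; rewrite s_ge0.
  by apply: (Hxi s _).1; rewrite s_le andbT lt_neqAle eq_sym st.
have k_gt0 s : 0 <= s <= M -> 0 < 1 + 2 * kappa * s * (Dh 1%N s) ^+ 2.
  move=> /andP[s_ge0 s_le]; have [s_le_t0|s_gt] := leP s t0.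
    by apply: H2; rewrite s_ge0.
  by apply: (Hxi s _).2; rewrite s_le andbT.
have [cF cF_gt0 F_ge] := potential_ge_quadratic t0_gt0 t0_lt_M F_t0 dF d2F l_gt0 F_gt0.
have [cK cK_gt0 K_ge] := kappa_factor_ge h_smooth (ltW (lt_trans t0_gt0 t0_lt_M)) k_gt0.
exists (Num.min 1 (Num.min cF cK)); first by rewrite !lt_min ltr01 cF_gt0 cK_gt0 ge_min lexx.
move=> s s_in; split.
  by apply: le_trans (F_ge s s_in); rewrite ler_wpM2r ?sqr_ge0 // !ge_min lexx orbT.
by apply: le_trans (K_ge s s_in); rewrite !ge_min lexx !orbT.
Qed.

Theorem lemma3p1 (R : realType) (f h : R -> R) (Df Dh : nat -> R -> R)
  (r0 kappa xi : R) :
  0 < r0 ->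
  (* (H1) *)
  smooth0 f Df -> smooth0 h Dh ->
  f (r0 ^+ 2) = 0 ->
  (* (H2) *)
  (forall s, 0 <= s <= r0 ^+ 2 -> 0 < 1 + 2 * kappa * s * (Dh 1%N s) ^+ 2) ->
  (* (H3) *)
  (forall s, 0 <= s < r0 ^+ 2 -> 0 < Fpot f r0 s) ->
  (exists (F1 : R -> R) (l : R),
      (forall s, 0 <= s -> rdw (Fpot f r0) s (F1 s)) /\
      rdw F1 (r0 ^+ 2) l /\ 0 < l) ->
  (* kappa > kappa_tilde *)
  (ktilde (Dh 1%N) r0 < kappa%:E)%E ->
  (* choice of xi_tilde *)
  0 < xi ->
  (forall s, r0 ^+ 2 < s <= r0 ^+ 2 + xi ->
     0 < Fpot f r0 s /\ 0 < 1 + 2 * kappa * s * (Dh 1%N s) ^+ 2) ->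
  exists C : R, 0 < C /\
    forall u du : R -> R[i],
      inX r0 u du ->
      (forall x, (cabs (u x)) ^+ 2 <= r0 ^+ 2 + xi) ->
      forall dhu : R -> R, wderiv (fun x => h ((cabs (u x)) ^+ 2)) dhu ->
      forall dw : R -> R, wderiv (fun x => (cabs (u x)) ^+ 2 - r0 ^+ 2) dw ->
      ({ae @lebesgue_measure R, forall x,
          C^-1 * ((cabs (du x)) ^+ 2 + ((cabs (u x)) ^+ 2 - r0 ^+ 2) ^+ 2)
          <= (cabs (du x)) ^+ 2 + Fpot f r0 ((cabs (u x)) ^+ 2)
             + kappa / 2 * (dhu x) ^+ 2}
       /\
       (\int[@lebesgue_measure R]_(x in setT)
           ((((cabs (u x)) ^+ 2 - r0 ^+ 2) ^+ 2 + (dw x) ^+ 2)%:E)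
         <= C%:E * Ekappa kappa f r0 u du dhu)%E
       /\
       (let m := inf (range (fun x => cabs (u x))) in
        0 < m ->
        (`| Pmom r0 u du | <= (C / m)%:E * Ekappa kappa f r0 u du dhu)%E)).
Proof.
(* Nor is [kappa > ktilde]: on [[0, r0 ^+ 2 + xi]] the positivity of
   [1 + 2 kappa s h'(s)^2] is already given by (H2) and the choice of [xi]. *)
move=> r0_gt0 _ h_smooth _ H2 H3 [F1 [l [dF [d2F l_gt0]]]] _ xi_gt0 Hxi.
have [c /andP[c_gt0 c_le1] c_coercive] :=
  coercivity_constant r0_gt0 h_smooth H2 H3 dF d2F l_gt0 Hxi xi_gt0.
have F_ge s s_in := (c_coercive s s_in).1; have K_ge s s_in := (c_coercive s s_in).2.
have F_cont : continuous (fun s : R => Fpot f r0 (Num.max s 0)).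
  by apply: continuous_clamp0 => s s_ge0; exists (F1 s); exact: dF.
have dh_rdw s : 0 <= s -> rdw h s (Dh 1%N s).
  by case: h_smooth => h0 dDh s_ge0; exact: rdw_ext h0 s_ge0 (dDh 0%N s s_ge0).
exists ((1 + 4 * (r0 ^+ 2 + xi)) / c); split.
  by rewrite divr_gt0 //; have := sqr_ge0 r0; lra.
move=> u du [[Re_weak Im_weak] _] u_le dhu dhu_weak dw dw_weak.
split; first exact (energy_density_ge_ae c_gt0 c_le1 F_ge K_ge dh_rdw
  Re_weak Im_weak u_le dhu_weak dw_weak).
split; first exact (sobolev_bound c_gt0 c_le1 F_ge K_ge F_cont dh_rdw
  Re_weak Im_weak u_le dhu_weak dw_weak).
move=> m m_gt0; refine (momentum_bound c_gt0 c_le1 F_ge K_ge F_cont dh_rdw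
  Re_weak Im_weak u_le dhu_weak dw_weak m m_gt0 _) => x.
by apply: ge_inf; [exists 0 => _ [y _ <-]; exact: cabs_ge0 | exists x].
Qed.
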